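(* Assume Condition B holds and let $\pi^{\delta_s}$ be the stationary distribution of the returned process $X^{\delta_s}$ (which is returned to the state $s$ whenever $X$ would hit $0$). Then $$\sum_{k\in C}\pi^{\delta_s}(k)\,q_{k0}=\frac{1-p_s}{T_s}.$$
   Context: $X$ is a stable, conservative, non-explosive pure jump Markov process on a countable state space $C\cup\{0\}$, where $0$ is an absorbing (cemetery) state and $C$ is a single irreducible transient class, with infinitesimal matrix $Q=(q_{ij})$. For a probability distribution $\mu$ on $C$, the returned process $X^\mu$ is the Markov process on $C$ with rates $q^\mu_{ij}=q_{ij}+q_{i0}\mu_j$, $i,j\in C$; $\delta_s$ is the point mass at $s$. For a set $A$, $\tau_A:=\inf\{t>0: X(t)\in A,\ X(u)\notin A\text{ for some }u<t\}$; $\mathbb{P}_k,\mathbb{E}_k$ refer to $X(0)=k$. Condition B: there is $s\in C$ such that, with $p_k:=\mathbb{P}_k[X(\tau_{\{s,0\}})=s]$ and $T_k:=\mathbb{E}_k[\tau_{\{s,0\}}]$, (i) $\inf_{k\in C}p_k=p>0$ and (ii) $T_k<\infty$ for all $k\in C$. *)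

(* classical real numbers. No measure theory is available,
   so the probabilistic quantities are expressed through the embedded jump
   chain as (unordered, nonnegative) sums over finite paths. *)
From Stdlib Require Import Reals Lra List Bool Arith ClassicalEpsilon.
Import ListNotations.
Open Scope R_scope.

Inductive ereal : Type := Fin (r : R) | Inf.

Definition finsums {A : Type} (f : A -> R) (r : R) : Prop :=
  exists l : list A, NoDup l /\ r = fold_right (fun a acc => f a + acc) 0 l.

Lemma finsums_ne {A : Type} (f : A -> R) : exists r, finsums f r.
Proof. exists 0. exists (@nil A). split; [constructor | reflexivity]. Qed.

Definition nnsum {A : Type} (f : A -> R) : ereal :=
  match excluded_middle_informative (bound (finsums f)) with
  | left H => Fin (proj1_sig (completeness (finsums f) H (finsums_ne f)))
  | right _ => Inf
  end.

(* State space C ∪ {0}, encoded in nat: 0 is the cemetery, C = {n | inC n}. *)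
Definition inS (inC : nat -> bool) (j : nat) : bool := (j =? 0)%nat || inC j.

Definition qtot (q : nat -> nat -> R) (i : nat) : R := - q i i.

Definition jumpP (q : nat -> nat -> R) (i j : nat) : R :=
  if (i =? j)%nat then 0 else q i j / qtot q i.

(* Probability that the jump chain started at k follows the path l = [x1;...;xn]. *)
Fixpoint pathw (q : nat -> nat -> R) (k : nat) (l : list nat) : R :=
  match l with
  | [] => 1
  | x :: l' => jumpP q k x * pathw q x l'
  end.

(* Sum of the mean holding times 1/q_{x_0} + ... + 1/q_{x_{n-1}} along the
   path k = x0, x1, ..., xn (conditional expectation of the elapsed time). *)
Fixpoint pathtime (q : nat -> nat -> R) (k : nat) (l : list nat) : R :=
  match l with
  | [] => 0
  | x :: l' => / qtot q k + pathtime q x l'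
  end.

Fixpoint hits (allowed target : nat -> bool) (l : list nat) : bool :=
  match l with
  | [] => false
  | [x] => target x
  | x :: l' => allowed x && hits allowed target l'
  end.

(* P_k[ the chain, after leaving k, enters 'target' (at a jump time) while
   staying in 'allowed' before ] *)
Definition hitprob (q : nat -> nat -> R) (allowed target : nat -> bool) (k : nat)
  : ereal :=
  nnsum (fun l : list nat => if hits allowed target l then pathw q k l else 0).

(* Region strictly before τ_{ {s,0} }: states of C other than s. *)
Definition avoid_s (inC : nat -> bool) (s : nat) (x : nat) : bool :=
  inC x && negb (x =? s)%nat.

(* p_k := P_k[ X(τ_{s,0}) = s ] *)
Definition p_hit (q : nat -> nat -> R) (inC : nat -> bool) (s k : nat) : ereal :=
  hitprob q (avoid_s inC s) (fun x => (x =? s)%nat) k.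

(* P_k[ τ_{s,0} < ∞ ] *)
Definition p_term (q : nat -> nat -> R) (inC : nat -> bool) (s k : nat) : ereal :=
  hitprob q (avoid_s inC s) (fun x => (x =? s)%nat || (x =? 0)%nat) k.

(* E_k[ τ_{s,0} ; τ_{s,0} < ∞ ] *)
Definition m_term (q : nat -> nat -> R) (inC : nat -> bool) (s k : nat) : ereal :=
  nnsum (fun l : list nat =>
    if hits (avoid_s inC s) (fun x => (x =? s)%nat || (x =? 0)%nat) l
    then pathw q k l * pathtime q k l else 0).

(* T_k := E_k[ τ_{s,0} ]  (= +∞ if τ_{s,0} = ∞ with positive probability) *)
Definition T_hit (q : nat -> nat -> R) (inC : nat -> bool) (s k : nat) : ereal :=
  match excluded_middle_informative (p_term q inC s k = Fin 1) with
  | left _ => m_term q inC s k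
  | right _ => Inf
  end.

Definition p_return (q : nat -> nat -> R) (inC : nat -> bool) (i : nat) : ereal :=
  hitprob q (fun x => inC x && negb (x =? i)%nat) (fun x => (x =? i)%nat) i.

Fixpoint pospath (q : nat -> nat -> R) (inC : nat -> bool) (k : nat) (l : list nat)
  : Prop :=
  match l with
  | [] => True
  | x :: l' => k <> x /\ inS inC x = true /\ 0 < q k x /\ pospath q inC x l'
  end.

Definition leads (q : nat -> nat -> R) (inC : nat -> bool) (i j : nat) : Prop :=
  exists l, pospath q inC i l /\ last (i :: l) i = j.

(* Standing assumptions: Q is a stable conservative rate matrix on C ∪ {0},
   0 is absorbing, C is a single irreducible transient class, and the process
   is non-explosive (Reuter's criterion: Qx = x, 0 <= x <= 1 forces x = 0). *)
Definition standing (q : nat -> nat -> R) (inC : nat -> bool) : Prop :=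
  inC 0%nat = false /\
  (forall i j, i <> j -> inS inC i = true -> inS inC j = true -> 0 <= q i j) /\
  (forall i, inS inC i = true ->
     nnsum (fun j => if inS inC j && negb (j =? i)%nat then q i j else 0)
     = Fin (- q i i)) /\
  (forall j, q 0%nat j = 0) /\
  (forall i j, inC i = true -> inC j = true -> leads q inC i j) /\
  (forall i, inC i = true -> exists r, p_return q inC i = Fin r /\ r < 1) /\
  (forall x : nat -> R,
     (forall i, inS inC i = true -> 0 <= x i <= 1) ->
     (forall i, inS inC i = true ->
        nnsum (fun j => if inS inC j && negb (j =? i)%nat then q i j * x j else 0)
        = Fin (x i - q i i * x i)) ->
     forall i, inS inC i = true -> x i = 0).

Definition conditionB (q : nat -> nat -> R) (inC : nat -> bool) (s : nat) : Prop :=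
  inC s = true /\
  (exists p, 0 < p /\ (forall k, inC k = true -> exists pk, p_hit q inC s k = Fin pk /\ p <= pk)
     /\ (forall e, 0 < e -> exists k, inC k = true /\
           exists pk, p_hit q inC s k = Fin pk /\ pk < p + e)) /\
  (forall k, inC k = true -> T_hit q inC s k <> Inf).

(* Rates of the returned process X^mu on C *)
Definition qret (q : nat -> nat -> R) (mu : nat -> R) (i j : nat) : R :=
  q i j + q i 0%nat * mu j.

Definition dirac (s : nat) (j : nat) : R := if (j =? s)%nat then 1 else 0.

Definition stationary (inC : nat -> bool) (q' : nat -> nat -> R) (pi : nat -> R) : Prop :=
  (forall k, inC k = true -> 0 <= pi k) /\
  nnsum (fun k => if inC k then pi k else 0) = Fin 1 /\
  (forall j, inC j = true ->
     nnsum (fun i => if inC i && negb (i =? j)%nat then pi i * q' i j else 0)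
     = Fin (- (pi j * q' j j))).

(* Let u_i be the expected number of visits of the jump chain to i during an
   excursion from s, i.e. before it enters {s, 0}, and let m_i = pi_i q_i.
   Stationarity of pi for the returned process says that m is invariant for
   the jump chain on C \ {s} and that all the mass entering {s, 0} is
   returned to s.  Minimality of u gives m_s u <= m; the difference is
   excessive and vanishes at s, so irreducibility forces m = m_s u, with
   m_s > 0 because pi is a probability.  Summing, with P the jump matrix,
   1 = sum_i pi_i = m_s sum_i u_i / q_i = m_s T_s; and since the chain
   enters {s, 0} almost surely, 1 = sum_k u_k (P(k,s) + P(k,0)) while
   p_s = sum_k u_k P(k,s), so sum_k pi_k q_k0 = m_s sum_k u_k P(k,0)
   = m_s (1 - p_s). *)

From Stdlib Require Import Reals.
From Stdlib Require Import Lra Lia List Bool Arith ClassicalEpsilon FunctionalExtensionality.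
Import ListNotations.
Open Scope R_scope.

(** * Finite and unordered sums *)

Definition fsum {A : Type} (f : A -> R) (l : list A) : R :=
  fold_right (fun a acc => f a + acc) 0 l.

Definition sum_bounded {A : Type} (f : A -> R) (M : R) : Prop :=
  forall l, NoDup l -> fsum f l <= M.

Definition classic_eq_dec {T : Type} (x y : T) : {x = y} + {x <> y} :=
  excluded_middle_informative (x = y).

Lemma fsum_cons {A : Type} (f : A -> R) a l : fsum f (a :: l) = f a + fsum f l.
Proof. reflexivity. Qed.

Lemma fsum_app {A : Type} (f : A -> R) l1 l2 : fsum f (l1 ++ l2) = fsum f l1 + fsum f l2.
Proof. induction l1 as [|a l1 IH]; unfold fsum in *; cbn; [ring|]. rewrite IH; ring. Qed.

Lemma fsum_plus {A : Type} (f g : A -> R) l : fsum (fun a => f a + g a) l = fsum f l + fsum g l.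
Proof. induction l as [|a l IH]; unfold fsum in *; cbn; [ring|]. rewrite IH; ring. Qed.

Lemma fsum_scal {A : Type} (f : A -> R) c l : fsum (fun a => c * f a) l = c * fsum f l.
Proof. induction l as [|a l IH]; unfold fsum in *; cbn; [ring|]. rewrite IH; ring. Qed.

Lemma fsum_const0 {A : Type} (l : list A) : fsum (fun _ => 0) l = 0.
Proof. induction l as [|a l IH]; unfold fsum in *; cbn; [ring|]. rewrite IH; ring. Qed.

Lemma fsum_ext_in {A : Type} (f g : A -> R) l : (forall a, In a l -> f a = g a) -> fsum f l = fsum g l.
Proof.
  induction l as [|a l IH]; intros H; unfold fsum in *; cbn; [reflexivity|].
  rewrite H by (left; auto). rewrite IH; auto. intros; apply H; right; auto.
Qed.

Lemma fsum_le {A : Type} (f g : A -> R) l : (forall a, In a l -> f a <= g a) -> fsum f l <= fsum g l.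
Proof.
  induction l as [|a l IH]; intros H; unfold fsum in *; cbn; [lra|].
  assert (f a <= g a) by (apply H; left; auto).
  assert (fold_right (fun b acc => f b + acc) 0 l <= fold_right (fun b acc => g b + acc) 0 l)
    by (apply IH; intros; apply H; right; auto).
  lra.
Qed.

Lemma fsum_ge0 {A : Type} (f : A -> R) l : (forall a, 0 <= f a) -> 0 <= fsum f l.
Proof. intros H. rewrite <- (fsum_const0 l). apply fsum_le; auto. Qed.

Lemma fsum_map {A B : Type} (f : B -> R) (phi : A -> B) l : fsum f (map phi l) = fsum (fun a => f (phi a)) l.
Proof. induction l as [|a l IH]; unfold fsum in *; cbn; [reflexivity|]. rewrite IH; reflexivity. Qed.

Lemma fsum_filter {A : Type} (f : A -> R) (p : A -> bool) l :
  fsum f (filter p l) = fsum (fun a => if p a then f a else 0) l.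
Proof.
  induction l as [|a l IH]; unfold fsum in *; cbn; [reflexivity|].
  destruct (p a); cbn; rewrite IH; ring.
Qed.

Lemma fsum_le_cover {A : Type} (f : A -> R) (L K : list A) :
  NoDup L -> NoDup K -> (forall a, In a L -> f a <> 0 -> In a K) -> (forall a, 0 <= f a) ->
  fsum f L <= fsum f K.
Proof.
  intros HL; revert K; induction HL as [|a L Ha HL IH]; intros K HK Hin Hpos.
  - apply fsum_ge0; auto.
  - rewrite fsum_cons. destruct (Req_dec (f a) 0) as [E|E].
    + rewrite E, Rplus_0_l. apply IH; auto. intros; apply Hin; auto; right; auto.
    + assert (Hk : In a K) by (apply Hin; auto; left; auto).
      destruct (in_split a K Hk) as [K1 [K2 ->]].
      destruct (NoDup_remove _ _ _ HK) as [HK' _].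
      rewrite fsum_app, fsum_cons.
      assert (fsum f L <= fsum f (K1 ++ K2)); [|rewrite fsum_app in *; lra].
      apply IH; auto. intros b Hb Hfb.
      destruct (in_app_or _ _ _ (Hin b (or_intror Hb) Hfb)) as [H|[H|H]];
        apply in_or_app; auto. subst; contradiction.
Qed.

Lemma fsum_indicator {A B : Type} (key : A -> B) (c : R) a (K : list B) :
  NoDup K -> In (key a) K -> fsum (fun b => if classic_eq_dec (key a) b then c else 0) K = c.
Proof.
  intros HK Hin. destruct (in_split _ _ Hin) as [K1 [K2 ->]].
  destruct (NoDup_remove _ _ _ HK) as [_ Hn].
  assert (Hout : forall K' : list B, incl K' (K1 ++ K2) ->
            fsum (fun b => if classic_eq_dec (key a) b then c else 0) K' = 0).
  { intros K' HK'. transitivity (fsum (fun _ : B => 0) K'); [|apply fsum_const0].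
    apply fsum_ext_in.
    intros b Hb. destruct (classic_eq_dec (key a) b) as [E|]; auto.
    subst b. exfalso; apply Hn, HK'; auto. }
  rewrite fsum_app, fsum_cons, !Hout by (intros ?; rewrite in_app_iff; auto).
  destruct (classic_eq_dec (key a) (key a)); [lra|congruence].
Qed.

Lemma fsum_group {A B : Type} (f : A -> R) (key : A -> B) L (K : list B) :
  NoDup K -> (forall a, In a L -> In (key a) K) ->
  fsum f L = fsum (fun b => fsum (fun a => if classic_eq_dec (key a) b then f a else 0) L) K.
Proof.
  intros HK; induction L as [|a L IH]; intros Hin.
  - symmetry; apply fsum_const0.
  - rewrite fsum_cons, IH by (intros; apply Hin; right; auto).
    rewrite (fsum_ext_in
      (fun b => fsum (fun a0 => if classic_eq_dec (key a0) b then f a0 else 0) (a :: L))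
      (fun b => (if classic_eq_dec (key a) b then f a else 0) +
                fsum (fun a0 => if classic_eq_dec (key a0) b then f a0 else 0) L))
      by reflexivity.
    rewrite fsum_plus, fsum_indicator; auto. apply Hin; left; auto.
Qed.

Lemma sum_bounded_is_upper_bound {A : Type} (f : A -> R) M :
  sum_bounded f M <-> is_upper_bound (finsums f) M.
Proof.
  split.
  - intros H r [l [Hl ->]]. apply H; auto.
  - intros H l Hl. apply H. exists l; split; auto.
Qed.

Lemma nnsum_is_lub {A : Type} (f : A -> R) r : is_lub (finsums f) r -> nnsum f = Fin r.
Proof.
  intros H. unfold nnsum. destruct excluded_middle_informative as [Hb|Hb].
  - destruct completeness as [x Hx]; cbn. f_equal.
    apply Rle_antisym; [apply Hx, H | apply H, Hx].
  - exfalso; apply Hb. exists r; apply H.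
Qed.

Lemma nnsum_Fin_is_lub {A : Type} (f : A -> R) r : nnsum f = Fin r -> is_lub (finsums f) r.
Proof.
  unfold nnsum. destruct excluded_middle_informative; intros E; [|discriminate].
  destruct completeness as [x Hx]; cbn in E. injection E as <-; auto.
Qed.

Lemma nnsum_Fin_bounded {A : Type} (f : A -> R) r : nnsum f = Fin r -> sum_bounded f r.
Proof. intros H; apply sum_bounded_is_upper_bound, nnsum_Fin_is_lub; auto. Qed.

Lemma nnsum_Fin_least {A : Type} (f : A -> R) r M :
  nnsum f = Fin r -> sum_bounded f M -> r <= M.
Proof. intros H H'; apply (nnsum_Fin_is_lub _ _ H), sum_bounded_is_upper_bound; auto. Qed.

Lemma nnsum_Fin_approx {A : Type} (f : A -> R) r e : nnsum f = Fin r -> 0 < e ->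
  exists l, NoDup l /\ r - e < fsum f l.
Proof.
  intros H He. apply NNPP; intros C.
  enough (r <= r - e) by lra.
  apply (nnsum_Fin_least f); auto. intros l Hl.
  apply Rnot_lt_le. intros C'. apply C; eauto.
Qed.

Lemma nnsum_bounded_Fin {A : Type} (f : A -> R) M :
  sum_bounded f M -> exists r, nnsum f = Fin r /\ r <= M.
Proof.
  intros H. unfold nnsum. destruct excluded_middle_informative as [Hb|Hb].
  - destruct completeness as [x Hx]; cbn. exists x; split; auto.
    apply Hx, sum_bounded_is_upper_bound; auto.
  - exfalso; apply Hb; exists M; apply sum_bounded_is_upper_bound; auto.
Qed.

Lemma nnsum_same_bounds {A B : Type} (f : A -> R) (g : B -> R) :
  (forall M, sum_bounded f M <-> sum_bounded g M) -> nnsum f = nnsum g.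
Proof.
  intros H. destruct (nnsum g) eqn:Eg.
  - apply nnsum_is_lub. destruct (nnsum_Fin_is_lub _ _ Eg) as [Hub Hleast].
    split.
    + apply sum_bounded_is_upper_bound, H, sum_bounded_is_upper_bound, Hub.
    + intros b Hb. apply Hleast, sum_bounded_is_upper_bound, H, sum_bounded_is_upper_bound, Hb.
  - destruct (nnsum f) eqn:Ef; auto.
    apply nnsum_Fin_bounded, H, nnsum_bounded_Fin in Ef as [r' [Hr' _]]. congruence.
Qed.

Lemma nnsum_ext {A : Type} (f g : A -> R) : (forall a, f a = g a) -> nnsum f = nnsum g.
Proof. intros H. f_equal. apply functional_extensionality; auto. Qed.

Lemma nnsum_Fin_ge0 {A : Type} (f : A -> R) r : nnsum f = Fin r -> 0 <= r.
Proof. intros H. apply (nnsum_Fin_bounded _ _ H [] (NoDup_nil _)). Qed.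

Lemma nnsum_term_le {A : Type} (f : A -> R) r a :
  (forall a, 0 <= f a) -> nnsum f = Fin r -> f a <= r.
Proof.
  intros Hp H. enough (fsum f [a] <= r) by (cbn in *; lra).
  apply (nnsum_Fin_bounded _ _ H). repeat constructor; auto.
Qed.

Lemma nnsum_le_Fin {A : Type} (f g : A -> R) r :
  (forall a, f a <= g a) -> nnsum g = Fin r -> exists r', nnsum f = Fin r' /\ r' <= r.
Proof.
  intros Hle H. apply nnsum_bounded_Fin. intros l Hl.
  apply Rle_trans with (fsum g l); [apply fsum_le; auto | apply (nnsum_Fin_bounded _ _ H); auto].
Qed.

Lemma nnsum_finite_support {A : Type} (f : A -> R) K : NoDup K ->
  (forall a, ~ In a K -> f a = 0) -> (forall a, 0 <= f a) -> nnsum f = Fin (fsum f K).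
Proof.
  intros HK Hz Hp. apply nnsum_is_lub. split.
  - apply sum_bounded_is_upper_bound. intros l Hl. apply fsum_le_cover; auto.
    intros a _ Ha. apply NNPP; intros C; apply Ha; auto.
  - intros b Hb. apply Hb. exists K; auto.
Qed.

Lemma nnsum_zero {A : Type} (f : A -> R) : (forall a, f a = 0) -> nnsum f = Fin 0.
Proof.
  intros H. apply (nnsum_finite_support f []); [constructor | auto |].
  intros a; rewrite H; lra.
Qed.

Lemma nnsum_single {A : Type} (f : A -> R) a0 :
  (forall a, a <> a0 -> f a = 0) -> 0 <= f a0 -> nnsum f = Fin (f a0).
Proof.
  intros H H0. rewrite (nnsum_finite_support f [a0]).
  - cbn; f_equal; ring.
  - repeat constructor; auto.
  - intros a Ha; apply H; intros ->; apply Ha; left; auto.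
  - intros a; destruct (classic_eq_dec a a0) as [->|]; auto. rewrite H; auto; lra.
Qed.

Lemma nnsum_scal {A : Type} (f : A -> R) c r : 0 <= c -> nnsum f = Fin r ->
  nnsum (fun a => c * f a) = Fin (c * r).
Proof.
  intros Hc H. apply nnsum_is_lub. split.
  - apply sum_bounded_is_upper_bound. intros l Hl. rewrite fsum_scal.
    apply Rmult_le_compat_l; auto. apply (nnsum_Fin_bounded _ _ H); auto.
  - intros M HM. apply sum_bounded_is_upper_bound in HM.
    destruct (Req_dec c 0) as [->|E].
    + specialize (HM [] (NoDup_nil _)). cbn in HM; lra.
    + assert (r <= M / c).
      { apply (nnsum_Fin_least f); auto. intros l Hl. specialize (HM l Hl).
        rewrite fsum_scal in HM. apply (Rmult_le_reg_l c); [lra|]. field_simplify; lra. }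
      apply (Rmult_le_compat_l c) in H0; [|lra]. field_simplify in H0; lra.
Qed.

Lemma nnsum_add {A : Type} (f g : A -> R) a b :
  (forall x, 0 <= f x) -> (forall x, 0 <= g x) ->
  nnsum f = Fin a -> nnsum g = Fin b -> nnsum (fun x => f x + g x) = Fin (a + b).
Proof.
  intros Hf Hg Ha Hb. apply nnsum_is_lub. split.
  - apply sum_bounded_is_upper_bound. intros l Hl. rewrite fsum_plus.
    assert (fsum f l <= a) by (apply (nnsum_Fin_bounded _ _ Ha); auto).
    assert (fsum g l <= b) by (apply (nnsum_Fin_bounded _ _ Hb); auto). lra.
  - intros M HM. apply sum_bounded_is_upper_bound in HM. apply Rnot_lt_le; intros C.
    set (e := (a + b - M) / 2).
    destruct (nnsum_Fin_approx f a e Ha) as [l1 [H1 H1']]; [unfold e; lra|].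
    destruct (nnsum_Fin_approx g b e Hb) as [l2 [H2 H2']]; [unfold e; lra|].
    set (l := nodup classic_eq_dec (l1 ++ l2)).
    specialize (HM l (NoDup_nodup _ _)). rewrite fsum_plus in HM.
    assert (fsum f l1 <= fsum f l).
    { apply fsum_le_cover; auto. apply NoDup_nodup.
      intros x Hx _. apply nodup_In, in_or_app; auto. }
    assert (fsum g l2 <= fsum g l).
    { apply fsum_le_cover; auto. apply NoDup_nodup.
      intros x Hx _. apply nodup_In, in_or_app; auto. }
    unfold e in *; lra.
Qed.

Lemma nnsum_sub {A : Type} (f g : A -> R) a b :
  (forall x, 0 <= g x) -> (forall x, g x <= f x) ->
  nnsum f = Fin a -> nnsum g = Fin b -> nnsum (fun x => f x - g x) = Fin (a - b).
Proof.
  intros Hg Hle Ha Hb.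
  destruct (nnsum_le_Fin (fun x => f x - g x) f a) as [c [Hc _]]; auto.
  { intros x; specialize (Hg x); lra. }
  assert (E := nnsum_add g (fun x => f x - g x) b c Hg
                 ltac:(intros x; specialize (Hle x); lra) Hb Hc).
  rewrite (nnsum_ext _ f), Ha in E by (intros; ring). injection E as E.
  rewrite Hc; f_equal; lra.
Qed.

Lemma nnsum_partition {A B : Type} (f : A -> R) (key : A -> B) (g : B -> R) :
  (forall a, 0 <= f a) ->
  (forall b, nnsum (fun a => if classic_eq_dec (key a) b then f a else 0) = Fin (g b)) ->
  nnsum f = nnsum g.
Proof.
  intros Hp Hg. apply nnsum_same_bounds. intros M; split.
  - intros H K HK.
    assert (Happrox : forall e, 0 < e -> exists L, NoDup L /\
              (forall a, In a L -> In (key a) K) /\ fsum g K - e <= fsum f L).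
    { clear H. induction HK as [|b K Hb HK IH]; intros e He.
      - exists []; repeat split; [constructor | intros a [] | cbn; lra].
      - destruct (IH (e/2)) as [L' [HL' [HkL' HfL']]]; [lra|].
        destruct (nnsum_Fin_approx _ _ (e/2) (Hg b)) as [Lb [HLb HfLb]]; [lra|].
        set (in_b := fun a => if classic_eq_dec (key a) b then true else false).
        assert (Hin_b : forall a, In a (filter in_b Lb) -> key a = b).
        { intros a Ha. apply filter_In in Ha as [_ Ha]. unfold in_b in Ha.
          destruct (classic_eq_dec (key a) b); congruence. }
        exists (filter in_b Lb ++ L'). repeat split.
        + apply NoDup_app; auto using NoDup_filter.
          intros a Ha Ha'. apply Hb. rewrite <- (Hin_b a Ha). auto.
        + intros a Ha. apply in_app_or in Ha as [Ha|Ha]; [left; symmetry; auto | right; auto].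
        + rewrite fsum_app, fsum_cons, fsum_filter.
          assert (fsum (fun a => if in_b a then f a else 0) Lb =
                  fsum (fun a => if classic_eq_dec (key a) b then f a else 0) Lb)
            by (apply fsum_ext_in; intros a _; unfold in_b; destruct classic_eq_dec; auto).
          lra. }
    apply Rnot_lt_le; intros C.
    destruct (Happrox ((fsum g K - M)/2)) as [L [HL [_ HfL]]]; [lra|].
    specialize (H L HL). lra.
  - intros H L HL.
    set (K := nodup classic_eq_dec (map key L)).
    rewrite (fsum_group f key L K); [| apply NoDup_nodup |].
    + apply Rle_trans with (fsum g K).
      * apply fsum_le. intros b _. apply (nnsum_Fin_bounded _ _ (Hg b)); auto.
      * apply H, NoDup_nodup.
    + intros a Ha. apply nodup_In, in_map; auto.
Qed.

Lemma nnsum_reindex {A B : Type} (f : B -> R) (phi : A -> B) :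
  (forall b, 0 <= f b) ->
  (forall a1 a2, phi a1 = phi a2 -> a1 = a2) ->
  (forall b, f b <> 0 -> exists a, phi a = b) ->
  nnsum f = nnsum (fun a => f (phi a)).
Proof.
  intros Hp Hinj Hsur. apply nnsum_same_bounds. intros M; split.
  - intros H L HL. rewrite <- fsum_map. apply H.
    apply NoDup_map_NoDup_ForallPairs; auto. intros x y _ _; auto.
  - intros H L HL.
    enough (exists L', NoDup L' /\ (forall a, In a L' -> In (phi a) L) /\
              fsum (fun a => f (phi a)) L' = fsum f L) as [L' [H1 [_ <-]]] by auto.
    induction HL as [|b L Hb HL IH].
    + exists []; repeat split; auto. constructor.
    + destruct IH as [L' [H1 [H2 H3]]].
      destruct (Req_dec (f b) 0) as [E|E].
      * exists L'; repeat split; auto.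
        -- intros a Ha; right; auto.
        -- rewrite fsum_cons, E, H3; ring.
      * destruct (Hsur b E) as [a Ha]. exists (a :: L'); repeat split.
        -- constructor; auto. intros Hin. apply Hb. rewrite <- Ha. auto.
        -- intros a' [<-|Ha']; [left; auto | right; auto].
        -- rewrite !fsum_cons, H3, Ha; auto.
Qed.

Lemma nnsum_term_le_sub {A : Type} (f g : A -> R) a b x :
  (forall x, 0 <= g x <= f x) -> nnsum f = Fin a -> nnsum g = Fin b -> f x - g x <= a - b.
Proof.
  intros Hgf Ha Hb.
  apply (nnsum_term_le (fun x => f x - g x)); [intros y; specialize (Hgf y); lra|].
  apply nnsum_sub; auto; intros y; apply Hgf.
Qed.

Definition fin_value (x : ereal) : R := match x with Fin r => r | Inf => 0 end.

Lemma last_cons_default {A : Type} (x : A) l d1 d2 : last (x :: l) d1 = last (x :: l) d2.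
Proof.
  revert x; induction l as [|y l IH]; intros x; [reflexivity|].
  exact (IH y).
Qed.

Lemma last_cons_In {A : Type} (x : A) l d : In (last (x :: l) d) (x :: l).
Proof.
  revert x; induction l as [|y l IH]; intros x; [left; reflexivity|].
  right; exact (IH y).
Qed.

Lemma firstn_length_app {A : Type} (k r : list A) : firstn (length k) (k ++ r) = k.
Proof. rewrite <- (Nat.add_0_r (length k)), firstn_app_2, app_nil_r; reflexivity. Qed.

Lemma hits_app (allowed target : nat -> bool) k r : r <> [] ->
  hits allowed target (k ++ r) = forallb allowed k && hits allowed target r.
Proof.
  intros Hr. induction k as [|a k IH]; [reflexivity|].
  change (hits allowed target (a :: (k ++ r)) =
          (allowed a && forallb allowed k) && hits allowed target r).
  rewrite <- andb_assoc, <- IH. destruct (k ++ r) eqn:E; [|reflexivity].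
  destruct k, r; cbn in E; congruence.
Qed.

Lemma hits_rcons (allowed target : nat -> bool) k x :
  hits allowed target (k ++ [x]) = forallb allowed k && target x.
Proof. rewrite hits_app by discriminate. reflexivity. Qed.

Lemma hits_rcons_inv (allowed target : nat -> bool) l : hits allowed target l = true ->
  exists k x, l = k ++ [x] /\ forallb allowed k = true /\ target x = true.
Proof.
  intros H. assert (Hne : l <> []) by (intros ->; discriminate).
  rewrite (app_removelast_last 0%nat Hne) in H |- *.
  rewrite hits_rcons in H. apply andb_prop in H as [H1 H2].
  exists (removelast l), (last l 0%nat); auto.
Qed.

Lemma hits_prefix_allowed (allowed target : nat -> bool) l n :
  hits allowed target l = true -> (n < length l)%nat -> forallb allowed (firstn n l) = true.
Proof.
  intros H Hn. destruct (hits_rcons_inv _ _ _ H) as [k [x [-> [Hk _]]]].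
  rewrite length_app in Hn; cbn in Hn.
  rewrite firstn_app, (proj2 (Nat.sub_0_le n (length k))) by lia. cbn. rewrite app_nil_r.
  rewrite forallb_forall in *. intros y Hy. apply Hk.
  rewrite <- (firstn_skipn n k). apply in_or_app; auto.
Qed.

Lemma pathw_app q k l1 l2 :
  pathw q k (l1 ++ l2) = pathw q k l1 * pathw q (last (k :: l1) k) l2.
Proof.
  revert k; induction l1 as [|x l1 IH]; intros k; cbn; [ring|].
  rewrite IH, (last_cons_default x l1 x k). destruct l1; cbn; ring.
Qed.

(* The holding time of the n-th step is read off the endpoint of the n-step prefix. *)
Lemma pathtime_fsum q k l :
  pathtime q k l = fsum (fun n => / qtot q (last (k :: firstn n l) k)) (seq 0 (length l)).
Proof.
  revert k; induction l as [|x l IH]; intros k; [reflexivity|].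
  cbn [pathtime length]. rewrite <- cons_seq, fsum_cons, <- seq_shift, fsum_map, IH.
  f_equal. apply fsum_ext_in. intros n _. cbn [firstn].
  rewrite (last_cons_default x _ x k). reflexivity.
Qed.

Lemma jumpP_diag q x : jumpP q x x = 0.
Proof. unfold jumpP. rewrite Nat.eqb_refl. reflexivity. Qed.

Lemma last_cons_rcons {A : Type} (a : A) l x d : last (a :: l ++ [x]) d = x.
Proof. exact (last_last (a :: l) x d). Qed.

Definition short (n : nat) (k : list nat) : bool := (length k <=? n)%nat.

Lemma short_rcons n k x : short (S n) (k ++ [x]) = short n k.
Proof. unfold short. rewrite length_app, Nat.add_1_r. reflexivity. Qed.

Lemma inS_of_inC inC x : inC x = true -> inS inC x = true.
Proof. intros H; unfold inS; rewrite H, orb_true_r; reflexivity. Qed.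

Lemma inS_inv inC x : inS inC x = true -> x = 0%nat \/ inC x = true.
Proof. unfold inS; intros [H|H]%orb_prop; auto. left; apply Nat.eqb_eq; auto. Qed.

(** * Excursions of the jump chain from s *)

Section JumpChain.

Variables (q : nat -> nat -> R) (inC : nat -> bool).
Hypothesis Hstd : standing q inC.

Lemma notC_0 : inC 0%nat = false.
Proof. apply Hstd. Qed.

Lemma rate_ge0 i j : i <> j -> inS inC i = true -> inS inC j = true -> 0 <= q i j.
Proof. apply Hstd. Qed.

Lemma exit_rates_sum i : inS inC i = true ->
  nnsum (fun j => if inS inC j && negb (j =? i)%nat then q i j else 0) = Fin (qtot q i).
Proof. apply Hstd. Qed.

Lemma qtot_ge0 i : inS inC i = true -> 0 <= qtot q i.
Proof. intros H. exact (nnsum_Fin_ge0 _ _ (exit_rates_sum i H)). Qed.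

Lemma rate_le_qtot i j : i <> j -> inS inC i = true -> inS inC j = true -> q i j <= qtot q i.
Proof.
  intros Hij Hi Hj.
  assert (Hterm_ge0 : forall a,
            0 <= (if inS inC a && negb (a =? i)%nat then q i a else 0)).
  { intros a. destruct (inS inC a) eqn:Ea, (a =? i)%nat eqn:Eai; cbn; try lra.
    apply rate_ge0; auto. apply Nat.eqb_neq in Eai; auto. }
  assert (T := nnsum_term_le _ _ j Hterm_ge0 (exit_rates_sum i Hi)).
  cbn beta in T. rewrite Hj, (proj2 (Nat.eqb_neq j i)) in T by auto. exact T.
Qed.

Lemma jumpP_ge0 i j : inS inC i = true -> inS inC j = true -> 0 <= jumpP q i j.
Proof.
  intros Hi Hj. unfold jumpP. destruct (i =? j)%nat eqn:E; [lra|].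
  apply Nat.eqb_neq in E. destruct (Req_dec (qtot q i) 0) as [Z|Z].
  - unfold Rdiv; rewrite Z, Rinv_0; lra.
  - apply Rmult_le_pos; [apply rate_ge0; auto|].
    apply Rlt_le, Rinv_0_lt_compat. generalize (qtot_ge0 i Hi); lra.
Qed.

Lemma pathw_ge0 k l : inS inC k = true -> Forall (fun x => inS inC x = true) l ->
  0 <= pathw q k l.
Proof.
  revert k; induction l as [|x l IH]; intros k Hk Hl; cbn; [lra|].
  inversion Hl; subst. apply Rmult_le_pos; [apply jumpP_ge0 | apply IH]; auto.
Qed.

Variable s : nat.
Hypothesis Cs : inC s = true.

Local Notation avoid := (avoid_s inC s).
Local Notation endpt k := (last (s :: k) s).

Lemma s_neq0 : s <> 0%nat.
Proof. intros E. generalize Cs notC_0. rewrite E. congruence. Qed.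

Lemma avoid_inC x : avoid x = true -> inC x = true.
Proof. unfold avoid_s; intros H; apply andb_prop in H; tauto. Qed.

Lemma avoid_neq x : avoid x = true -> x <> s.
Proof. unfold avoid_s; intros [_ H]%andb_prop. apply Nat.eqb_neq, negb_true_iff, H. Qed.

Lemma avoidI x : inC x = true -> x <> s -> avoid x = true.
Proof.
  intros H1 H2; unfold avoid_s; rewrite H1; cbn.
  apply negb_true_iff, Nat.eqb_neq; auto.
Qed.

Lemma endpt_inC k : forallb avoid k = true -> inC (endpt k) = true.
Proof.
  intros H. destruct (last_cons_In s k s) as [<-|E]; auto.
  rewrite forallb_forall in H. apply avoid_inC; auto.
Qed.

Lemma endpt_eq_s k : forallb avoid k = true -> endpt k = s -> k = [].
Proof.
  intros H E. destruct k as [|a k]; auto. exfalso.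
  change (last (a :: k) s = s) in E.
  assert (Hin := last_cons_In a k s). rewrite E in Hin.
  rewrite forallb_forall in H. apply (avoid_neq s); auto.
Qed.

Lemma excursion_ge0 k : forallb avoid k = true -> 0 <= pathw q s k.
Proof.
  intros H. apply pathw_ge0; [apply inS_of_inC, Cs|].
  apply Forall_forall. intros x Hx. rewrite forallb_forall in H.
  apply inS_of_inC, avoid_inC; auto.
Qed.

Lemma hits_pathw_ge0 target k l : inS inC k = true ->
  (forall x, target x = true -> inS inC x = true) ->
  hits avoid target l = true -> 0 <= pathw q k l.
Proof.
  intros Hk HT H. apply pathw_ge0; auto.
  destruct (hits_rcons_inv _ _ _ H) as [k' [x [-> [H1 H2]]]].
  apply Forall_app; split; [|constructor; auto].
  apply Forall_forall. intros y Hy. rewrite forallb_forall in H1.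
  apply inS_of_inC, avoid_inC; auto.
Qed.

(* Zeros of w propagate backwards along a positive-rate path from x to s,
   which cannot pass through the absorbing state 0. *)
Lemma irreducible_vanish (w : nat -> R) : w s = 0 ->
  (forall x y, avoid x = true -> inC y = true -> x <> y -> 0 < q x y -> w y = 0 -> w x = 0) ->
  forall x, inC x = true -> w x = 0.
Proof.
  intros Hs Hp x Hx. destruct Hstd as [_ [_ [_ [Hq0 [Hleads _]]]]].
  destruct (Hleads x s Hx Cs) as [l [Hl Hlast]]. clear Hleads.
  revert x Hx Hl Hlast. induction l as [|y l IH]; intros x Hx Hl Hlast.
  - cbn in Hlast; subst; auto.
  - destruct Hl as [Hxy [Hy [Hq Hl]]].
    change (last (y :: l) x = s) in Hlast. rewrite (last_cons_default y l x y) in Hlast.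
    destruct (inS_inv _ _ Hy) as [->|HyC].
    + exfalso. destruct l as [|z l].
      * cbn in Hlast. apply s_neq0; auto.
      * destruct Hl as [_ [_ [Hqz _]]]. rewrite Hq0 in Hqz. lra.
    + destruct (Nat.eq_dec x s) as [->|Hxs]; auto.
      apply (Hp x y); auto using avoidI.
Qed.

Hypothesis qtot_s_pos : 0 < qtot q s.

Lemma qtot_pos i : inC i = true -> 0 < qtot q i.
Proof.
  intros Hi. destruct (Nat.eq_dec i s) as [->|Hne]; auto.
  destruct Hstd as [_ [_ [_ [_ [Hleads _]]]]].
  destruct (Hleads i s Hi Cs) as [[|y l] [Hl Hlast]]; [cbn in Hlast; congruence|].
  destruct Hl as [Hiy [HyS [Hqy _]]].
  generalize (rate_le_qtot i y Hiy (inS_of_inC _ _ Hi) HyS); lra.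
Qed.

Lemma jumpP_pos x y : inC x = true -> x <> y -> 0 < q x y -> 0 < jumpP q x y.
Proof.
  intros Hx Hxy Hq. unfold jumpP. rewrite (proj2 (Nat.eqb_neq x y) Hxy).
  apply Rdiv_lt_0_compat; auto using qtot_pos.
Qed.

Lemma excessive_vanishes (w : nat -> R) :
  (forall x, inC x = true -> 0 <= w x) -> w s = 0 ->
  (forall i j, inC i = true -> avoid j = true -> i <> j -> w i * jumpP q i j <= w j) ->
  (forall i, avoid i = true -> w i * (jumpP q i s + jumpP q i 0%nat) <= 0) ->
  forall x, inC x = true -> w x = 0.
Proof.
  intros Hw0 Hs Hstep Htarget. apply irreducible_vanish; auto.
  intros x y Hx Hy Hxy Hq Hwy.
  assert (HxC := avoid_inC x Hx).
  assert (Hp := jumpP_pos x y HxC Hxy Hq).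
  assert (0 <= w x) by auto.
  assert (0 <= jumpP q x 0%nat) by (apply jumpP_ge0; [apply inS_of_inC|]; auto).
  destruct (Nat.eq_dec y s) as [->|Hys].
  - specialize (Htarget x Hx). nra.
  - specialize (Hstep x y HxC (avoidI y Hy Hys) Hxy). nra.
Qed.

(* Expected number of visits to i by the jump chain started at s, counting
   time 0 and stopping on entering {s, 0}; P restricts the excursion prefixes. *)
Definition visits (P : list nat -> bool) (i : nat) : ereal :=
  nnsum (fun k => if forallb avoid k && P k && (endpt k =? i)%nat then pathw q s k else 0).

Lemma visits_s P : P [] = true -> visits P s = Fin 1.
Proof.
  intros H. unfold visits. rewrite (nnsum_single _ []).
  - cbn. rewrite H, Nat.eqb_refl. reflexivity.
  - intros k Hk. destruct (forallb avoid k) eqn:E1, (P k), (endpt k =? s)%nat eqn:E2;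
      cbn; auto.
    apply Nat.eqb_eq in E2. exfalso; apply Hk, endpt_eq_s; auto.
  - cbn. rewrite H, Nat.eqb_refl. cbn; lra.
Qed.

Lemma visits_notC P i : inC i = false -> visits P i = Fin 0.
Proof.
  intros H. apply nnsum_zero. intros k.
  destruct (forallb avoid k) eqn:E1, (P k), (endpt k =? i)%nat eqn:E2; cbn; auto.
  apply Nat.eqb_eq in E2; subst. rewrite endpt_inC in H; auto; discriminate.
Qed.

Lemma visits_fin_value P :
  (forall i, inC i = true -> exists r, visits P i = Fin r) ->
  forall i, visits P i = Fin (fin_value (visits P i)).
Proof.
  intros Hfin i. destruct (inC i) eqn:Hi.
  - destruct (Hfin i Hi) as [r ->]. reflexivity.
  - rewrite visits_notC; auto.
Qed.

Lemma nnsum_excursions_by_endpoint P (h u : nat -> R) :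
  (forall i, visits P i = Fin (u i)) -> (forall i, inC i = true -> 0 <= h i) ->
  nnsum (fun k => if forallb avoid k && P k then pathw q s k * h (endpt k) else 0)
  = nnsum (fun i => h i * u i).
Proof.
  intros Hu Hh. apply nnsum_partition with (key := fun k => endpt k).
  - intros k. destruct (forallb avoid k) eqn:E, (P k); cbn; try lra.
    apply Rmult_le_pos; [apply excursion_ge0 | apply Hh, endpt_inC]; auto.
  - intros i. destruct (inC i) eqn:Hi.
    + rewrite <- (nnsum_scal _ _ _ (Hh i Hi) (Hu i)). apply nnsum_ext. intros k.
      destruct (classic_eq_dec (endpt k) i) as [<-|E].
      * rewrite Nat.eqb_refl, andb_true_r. destruct (forallb avoid k && P k); ring.
      * rewrite (proj2 (Nat.eqb_neq _ _) E), andb_false_r. ring.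
    + assert (Hu0 : u i = 0) by (generalize (visits_notC P i Hi); rewrite Hu; congruence).
      rewrite Hu0, Rmult_0_r. apply nnsum_zero. intros k.
      destruct (classic_eq_dec (endpt k) i) as [<-|]; auto.
      destruct (forallb avoid k) eqn:E; cbn; auto.
      rewrite endpt_inC in Hi; auto; discriminate.
Qed.

(* First-passage paths are grouped by the prefix before their final jump. *)
Lemma nnsum_last_step target (G : list nat -> R) (H : list nat -> R) :
  (forall x, target x = true -> inS inC x = true) -> (forall l, 0 <= G l) ->
  (forall k, forallb avoid k = true ->
     nnsum (fun x => if target x then jumpP q (endpt k) x * G (k ++ [x]) else 0) = Fin (H k)) ->
  nnsum (fun l => if hits avoid target l then pathw q s l * G l else 0) =
  nnsum (fun k => if forallb avoid k then pathw q s k * H k else 0).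
Proof.
  intros HT HG HH.
  assert (Hge0 : forall l, 0 <= (if hits avoid target l then pathw q s l * G l else 0)).
  { intros l. destruct (hits avoid target l) eqn:E; [|lra].
    apply Rmult_le_pos; auto. apply (hits_pathw_ge0 target); auto. apply inS_of_inC, Cs. }
  apply nnsum_partition with (key := @removelast nat); auto.
  intros k. rewrite (nnsum_reindex _ (fun x => k ++ [x])).
  - rewrite (nnsum_ext _ (fun x => if forallb avoid k then pathw q s k *
        (if target x then jumpP q (endpt k) x * G (k ++ [x]) else 0) else 0)).
    + destruct (forallb avoid k) eqn:Ek.
      * apply nnsum_scal; auto. apply excursion_ge0; auto.
      * apply nnsum_zero; auto.
    + intros x. rewrite removelast_last. destruct (classic_eq_dec k k) as [_|C]; [|congruence].
      rewrite hits_rcons, pathw_app.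
      destruct (forallb avoid k); cbn [andb]; [|reflexivity].
      destruct (target x); cbn; ring.
  - intros l. destruct (classic_eq_dec (removelast l) k); auto; lra.
  - intros x y E. apply app_inv_head in E. injection E; auto.
  - intros l Hl. destruct (classic_eq_dec (removelast l) k) as [<-|]; [|lra].
    destruct (hits avoid target l) eqn:Eh; [|lra].
    exists (last l 0%nat). symmetry. apply app_removelast_last.
    intros ->; discriminate.
Qed.

Lemma visits_step P P' j (u : nat -> R) : avoid j = true ->
  (forall i, visits P i = Fin (u i)) -> (forall k x, P' (k ++ [x]) = P k) ->
  visits P' j = nnsum (fun i => jumpP q i j * u i).
Proof.
  intros Hj Hu HP.
  assert (HjC : inC j = true) by (apply avoid_inC; auto).
  assert (Hjs : j <> s) by (apply avoid_neq; auto).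
  unfold visits. rewrite (nnsum_ext _ (fun l => if hits avoid (fun x => (x =? j)%nat) l
        then pathw q s l * (if P' l then 1 else 0) else 0)).
  2:{ intros l. induction l as [|x l _] using rev_ind.
      - cbn. rewrite (proj2 (Nat.eqb_neq s j)) by auto. rewrite andb_false_r. reflexivity.
      - rewrite hits_rcons, last_cons_rcons, forallb_app. cbn [forallb].
        destruct (x =? j)%nat eqn:Ex.
        + apply Nat.eqb_eq in Ex; subst. rewrite Hj.
          destruct (forallb avoid l), (P' (l ++ [j])); cbn; ring.
        + rewrite !andb_false_r. reflexivity. }
  rewrite (nnsum_last_step _ _ (fun k => jumpP q (endpt k) j * (if P k then 1 else 0))).
  - rewrite <- (nnsum_excursions_by_endpoint P (fun i => jumpP q i j) u Hu).
    + apply nnsum_ext. intros k. destruct (forallb avoid k), (P k); cbn; ring.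
    + intros i Hi. apply jumpP_ge0; apply inS_of_inC; auto.
  - intros x Hx. apply Nat.eqb_eq in Hx; subst. apply inS_of_inC; auto.
  - intros l; destruct (P' l); lra.
  - intros k Hk. rewrite (nnsum_single _ j).
    + rewrite Nat.eqb_refl, HP. reflexivity.
    + intros x Hx. rewrite (proj2 (Nat.eqb_neq x j) Hx). auto.
    + rewrite Nat.eqb_refl. apply Rmult_le_pos.
      * apply jumpP_ge0; apply inS_of_inC; auto. apply endpt_inC; auto.
      * destruct (P' _); lra.
Qed.

Lemma hitprob_by_visits target (h u : nat -> R) :
  (forall x, target x = true -> inS inC x = true) ->
  (forall i, inC i = true -> nnsum (fun x => if target x then jumpP q i x else 0) = Fin (h i)) ->
  (forall i, inC i = true -> 0 <= h i) ->
  (forall i, visits (fun _ => true) i = Fin (u i)) ->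
  hitprob q avoid target s = nnsum (fun i => h i * u i).
Proof.
  intros HT Hh Hh0 Hu. unfold hitprob.
  rewrite (nnsum_ext _ (fun l => if hits avoid target l then pathw q s l * 1 else 0))
    by (intros l; destruct (hits avoid target l); ring).
  rewrite (nnsum_last_step _ _ (fun k => h (endpt k))); auto.
  - rewrite <- (nnsum_excursions_by_endpoint (fun _ => true) h u); auto.
    apply nnsum_ext. intros k. rewrite andb_true_r. reflexivity.
  - intros; lra.
  - intros k Hk. rewrite <- Hh by (apply endpt_inC; auto). apply nnsum_ext.
    intros x. destruct (target x); ring.
Qed.

Local Notation stop := (fun x => (x =? s)%nat || (x =? 0)%nat).

Lemma stop_inS x : stop x = true -> inS inC x = true.
Proof.
  intros [Hx|Hx]%orb_prop; apply Nat.eqb_eq in Hx as ->; [apply inS_of_inC, Cs | reflexivity].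
Qed.

Lemma inv_qtot_ge0 i : inS inC i = true -> 0 <= / qtot q i.
Proof.
  intros Hi. destruct (Req_dec (qtot q i) 0) as [->|Z]; [rewrite Rinv_0; lra|].
  apply Rlt_le, Rinv_0_lt_compat. generalize (qtot_ge0 i Hi); lra.
Qed.

(* The mean holding time of the n-th step of the first-passage path l,
   weighted by the probability of l. *)
Definition holding_weight (p : list nat * nat) : R :=
  if hits avoid stop (fst p) && (snd p <? length (fst p))%nat
  then pathw q s (fst p) * / qtot q (endpt (firstn (snd p) (fst p))) else 0.

(* The same weight for the path k ++ r, read as an excursion prefix k
   followed by a first passage r from the endpoint of k. *)
Definition split_weight (p : list nat * list nat) : R :=
  if forallb avoid (fst p) then pathw q s (fst p) * / qtot q (endpt (fst p)) *
     (if hits avoid stop (snd p) then pathw q (endpt (fst p)) (snd p) else 0) else 0.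

Lemma holding_weight_ge0 p : 0 <= holding_weight p.
Proof.
  unfold holding_weight.
  destruct (hits avoid stop (fst p)) eqn:E, (snd p <? length (fst p))%nat eqn:E2;
    cbn [andb]; try lra.
  apply Nat.ltb_lt in E2.
  apply Rmult_le_pos.
  - apply (hits_pathw_ge0 stop); auto using stop_inS. apply inS_of_inC, Cs.
  - apply inv_qtot_ge0, inS_of_inC, endpt_inC. eapply hits_prefix_allowed; eauto.
Qed.

Lemma split_weight_ge0 p : 0 <= split_weight p.
Proof.
  unfold split_weight. destruct (forallb avoid (fst p)) eqn:E; cbn; [|lra].
  assert (HeC := endpt_inC _ E).
  apply Rmult_le_pos; [apply Rmult_le_pos|].
  - apply excursion_ge0; auto.
  - apply inv_qtot_ge0, inS_of_inC; auto.
  - destruct (hits avoid stop (snd p)) eqn:E2; cbn; [|lra].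
    apply (hits_pathw_ge0 stop); auto using stop_inS, inS_of_inC.
Qed.

Lemma m_term_holding_weight : m_term q inC s s = nnsum holding_weight.
Proof.
  symmetry. apply (nnsum_partition holding_weight fst); [apply holding_weight_ge0|].
  intros l. set (K := map (fun n => (l, n)) (seq 0 (length l))).
  rewrite (nnsum_finite_support _ K).
  - unfold K. rewrite fsum_map. cbn [fst]. destruct (classic_eq_dec l l) as [_|]; [|congruence].
    destruct (hits avoid stop l) eqn:Eh.
    + rewrite pathtime_fsum, <- fsum_scal. f_equal. apply fsum_ext_in. intros n Hn.
      apply in_seq in Hn. unfold holding_weight; cbn [fst snd]. rewrite Eh.
      rewrite (proj2 (Nat.ltb_lt n (length l))) by lia. reflexivity.
    + rewrite <- (fsum_const0 (seq 0 (length l))). f_equal. apply fsum_ext_in. intros n _.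
      unfold holding_weight; cbn [fst snd]. rewrite Eh. reflexivity.
  - unfold K. apply NoDup_map_NoDup_ForallPairs; [|apply seq_NoDup].
    intros x y _ _ E; injection E; auto.
  - intros [l' n] Hn. cbn [fst]. destruct (classic_eq_dec l' l) as [->|]; auto.
    unfold holding_weight; cbn [fst snd]. destruct (n <? length l)%nat eqn:E; [|rewrite andb_false_r; auto].
    exfalso. apply Hn. unfold K. apply in_map, in_seq. apply Nat.ltb_lt in E. lia.
  - intros p. destruct (classic_eq_dec (fst p) l); [apply holding_weight_ge0 | lra].
Qed.

Lemma holding_weight_split : nnsum holding_weight = nnsum split_weight.
Proof.
  rewrite (nnsum_reindex holding_weight (fun kr => (fst kr ++ snd kr, length (fst kr)))).
  - apply nnsum_ext. intros [k [|x r]]; unfold holding_weight, split_weight; cbn [fst snd].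
    + rewrite app_nil_r, Nat.ltb_irrefl, andb_false_r. cbn [hits].
      destruct (forallb avoid k); ring.
    + rewrite hits_app, length_app by discriminate. cbn [length].
      rewrite (proj2 (Nat.ltb_lt (length k) (length k + S (length r)))) by lia.
      rewrite firstn_length_app, pathw_app, andb_true_r.
      destruct (forallb avoid k); cbn [andb]; [|reflexivity].
      destruct (hits avoid stop (x :: r)); ring.
  - apply holding_weight_ge0.
  - intros [k1 r1] [k2 r2] E. cbn in E. injection E as E1 E2.
    assert (k1 = k2) as <-.
    { rewrite <- (firstn_length_app k1 r1), <- (firstn_length_app k2 r2), E1, E2.
      reflexivity. }
    apply app_inv_head in E1 as <-. reflexivity.
  - intros [l n] Hn. unfold holding_weight in Hn; cbn [fst snd] in Hn.
    destruct (n <? length l)%nat eqn:E; [|rewrite andb_false_r in Hn; lra].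
    apply Nat.ltb_lt in E. exists (firstn n l, skipn n l). cbn [fst snd].
    rewrite firstn_skipn, firstn_length_le by lia. reflexivity.
Qed.

Lemma split_weight_by_prefix : (forall k, inC k = true -> p_term q inC s k = Fin 1) ->
  nnsum split_weight =
  nnsum (fun k => if forallb avoid k then pathw q s k * / qtot q (endpt k) else 0).
Proof.
  intros Hterm. apply (nnsum_partition split_weight fst); [apply split_weight_ge0|].
  intros k. rewrite (nnsum_reindex _ (fun r : list nat => (k, r))).
  - cbn [fst]. destruct (classic_eq_dec k k) as [_|]; [|congruence].
    unfold split_weight; cbn [fst snd]. destruct (forallb avoid k) eqn:Ek.
    + replace (Fin (pathw q s k * / qtot q (endpt k)))
        with (Fin (pathw q s k * / qtot q (endpt k) * 1)) by (f_equal; ring).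
      apply nnsum_scal; [|exact (Hterm _ (endpt_inC k Ek))].
      apply Rmult_le_pos; [apply excursion_ge0 | apply inv_qtot_ge0, inS_of_inC, endpt_inC]; auto.
    + apply nnsum_zero; reflexivity.
  - intros p. destruct (classic_eq_dec (fst p) k); [apply split_weight_ge0 | lra].
  - intros r1 r2 E; injection E; auto.
  - intros [k' r] H. cbn [fst] in H. destruct (classic_eq_dec k' k) as [->|]; [|lra].
    exists r; reflexivity.
Qed.

Lemma m_term_by_visits (u : nat -> R) :
  (forall k, inC k = true -> p_term q inC s k = Fin 1) ->
  (forall i, visits (fun _ => true) i = Fin (u i)) ->
  m_term q inC s s = nnsum (fun i => / qtot q i * u i).
Proof.
  intros Hterm Hu.
  rewrite m_term_holding_weight, holding_weight_split, split_weight_by_prefix by auto.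
  rewrite <- (nnsum_excursions_by_endpoint (fun _ => true) (fun i => / qtot q i) u Hu).
  - apply nnsum_ext. intros k. rewrite andb_true_r. reflexivity.
  - intros i Hi. apply inv_qtot_ge0, inS_of_inC; auto.
Qed.

End JumpChain.

(** * The stationary distribution of the returned process *)

Section Stationary.

Variables (q : nat -> nat -> R) (inC : nat -> bool) (s : nat) (pi : nat -> R).
Hypotheses (Hstd : standing q inC) (Cs : inC s = true) (qtot_s_pos : 0 < qtot q s)
  (Hpi : stationary inC (qret q (dirac s)) pi).

Local Notation avoid := (avoid_s inC s).

(* pi_i q_i, the stationary rate of jumps out of i. *)
Definition flow i := pi i * qtot q i.

Lemma flow_ge0 i : inC i = true -> 0 <= flow i.
Proof.
  intros Hi. apply Rmult_le_pos; [apply Hpi; auto|].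
  apply (qtot_ge0 q inC Hstd), inS_of_inC; auto.
Qed.

Lemma flow_balance j : avoid j = true ->
  nnsum (fun i => if inC i && negb (i =? j)%nat then flow i * jumpP q i j else 0)
  = Fin (flow j).
Proof.
  intros Hj. destruct Hpi as [_ [_ Hbal]].
  assert (HjC := avoid_inC _ _ _ Hj).
  assert (Hd : dirac s j = 0)
    by (unfold dirac; rewrite (proj2 (Nat.eqb_neq j s)); [|apply (avoid_neq inC)]; auto).
  rewrite (nnsum_ext _ (fun i => if inC i && negb (i =? j)%nat
                                  then pi i * qret q (dirac s) i j else 0)).
  - rewrite Hbal by auto. f_equal. unfold qret, flow, qtot. rewrite Hd. ring.
  - intros i. destruct (inC i) eqn:Ei, (i =? j)%nat eqn:Eij; cbn; auto.
    unfold qret, flow, jumpP. rewrite Eij, Hd.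
    assert (0 < qtot q i) by (apply (qtot_pos q inC Hstd s Cs qtot_s_pos); auto).
    field. lra.
Qed.

Lemma flow_step_ge0 i j : inC i = true -> inS inC j = true -> 0 <= flow i * jumpP q i j.
Proof.
  intros Hi Hj. apply Rmult_le_pos; [apply flow_ge0 | apply (jumpP_ge0 q inC Hstd)];
    auto using inS_of_inC.
Qed.

Lemma flow_stop_ge0 i : inC i = true -> 0 <= flow i * (jumpP q i s + jumpP q i 0%nat).
Proof.
  intros Hi. rewrite Rmult_plus_distr_l.
  apply Rplus_le_le_0_compat; apply flow_step_ge0; auto using inS_of_inC.
Qed.

(* In X^{δ_s} a jump into 0 is redirected to s, whence the q_{i0} term. *)
Lemma flow_balance_s :
  nnsum (fun i => if inC i && negb (i =? s)%nat
                  then flow i * (jumpP q i s + jumpP q i 0%nat) else 0)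
  = Fin (flow s * (1 - jumpP q s 0%nat)).
Proof.
  destruct Hpi as [_ [_ Hbal]].
  assert (Hs0 := s_neq0 _ _ Hstd _ Cs).
  rewrite (nnsum_ext _ (fun i => if inC i && negb (i =? s)%nat
                                  then pi i * qret q (dirac s) i s else 0)).
  - rewrite Hbal by auto. f_equal. unfold qret, flow, jumpP, dirac.
    rewrite Nat.eqb_refl, (proj2 (Nat.eqb_neq s 0%nat)) by auto.
    unfold qtot in *. field. lra.
  - intros i. destruct (inC i) eqn:Ei, (i =? s)%nat eqn:Eis; cbn; auto.
    assert (Ei0 : (i =? 0)%nat = false)
      by (apply Nat.eqb_neq; intros ->; rewrite (notC_0 q inC Hstd) in Ei; discriminate).
    unfold qret, flow, jumpP, dirac. rewrite Eis, Ei0, Nat.eqb_refl.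
    assert (0 < qtot q i) by (apply (qtot_pos q inC Hstd s Cs qtot_s_pos); auto).
    field. lra.
Qed.

Lemma flow_into_stop :
  nnsum (fun i => if inC i then flow i * (jumpP q i s + jumpP q i 0%nat) else 0) = Fin (flow s).
Proof.
  assert (Hself : nnsum (fun i => if (i =? s)%nat
                                  then flow s * (jumpP q s s + jumpP q s 0%nat) else 0)
                  = Fin (flow s * jumpP q s 0%nat)).
  { rewrite (nnsum_single _ s).
    - rewrite Nat.eqb_refl, jumpP_diag, Rplus_0_l. reflexivity.
    - intros i Hi. rewrite (proj2 (Nat.eqb_neq i s) Hi). reflexivity.
    - rewrite Nat.eqb_refl. apply flow_stop_ge0, Cs. }
  assert (Hothers_ge0 : forall i, 0 <= (if inC i && negb (i =? s)%nat
                          then flow i * (jumpP q i s + jumpP q i 0%nat) else 0)).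
  { intros i. destruct (inC i) eqn:Ei, (i =? s)%nat; cbn; try lra.
    apply flow_stop_ge0; auto. }
  assert (Hself_ge0 : forall i, 0 <= (if (i =? s)%nat
                        then flow s * (jumpP q s s + jumpP q s 0%nat) else 0)).
  { intros i. destruct (i =? s)%nat; [apply flow_stop_ge0, Cs | lra]. }
  replace (flow s) with (flow s * (1 - jumpP q s 0%nat) + flow s * jumpP q s 0%nat) by ring.
  rewrite <- (nnsum_add _ _ _ _ Hothers_ge0 Hself_ge0 flow_balance_s Hself).
  apply nnsum_ext. intros i. destruct (inC i) eqn:Ei, (i =? s)%nat eqn:Eis; cbn; try ring.
  - apply Nat.eqb_eq in Eis; subst; ring.
  - apply Nat.eqb_eq in Eis; subst. congruence.
Qed.

Lemma flow_step_le i j : inC i = true -> avoid j = true -> i <> j ->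
  flow i * jumpP q i j <= flow j.
Proof.
  intros Hi Hj Hij.
  assert (Hge0 : forall a,
            0 <= (if inC a && negb (a =? j)%nat then flow a * jumpP q a j else 0)).
  { intros a. destruct (inC a) eqn:Ea, (a =? j)%nat; cbn; try lra.
    apply flow_step_ge0; auto. apply inS_of_inC, (avoid_inC inC s); auto. }
  generalize (nnsum_term_le _ _ i Hge0 (flow_balance j Hj)).
  rewrite Hi, (proj2 (Nat.eqb_neq i j) Hij). auto.
Qed.

Lemma flow_stop_le i : inC i = true -> flow i * (jumpP q i s + jumpP q i 0%nat) <= flow s.
Proof.
  intros Hi.
  assert (Hge0 : forall a,
            0 <= (if inC a then flow a * (jumpP q a s + jumpP q a 0%nat) else 0)).
  { intros a. destruct (inC a) eqn:Ea; [apply flow_stop_ge0; auto | lra]. }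
  generalize (nnsum_term_le _ _ i Hge0 flow_into_stop). rewrite Hi. auto.
Qed.

Lemma flow_s_pos : 0 < flow s.
Proof.
  destruct (Rle_lt_dec (flow s) 0) as [Hle|]; auto. exfalso.
  assert (Hs0 : flow s = 0) by (generalize (flow_ge0 s Cs); lra).
  assert (Hzero : forall x, inC x = true -> flow x = 0).
  { apply (excessive_vanishes q inC Hstd s Cs qtot_s_pos); auto using flow_ge0, flow_step_le.
    intros i Hi. rewrite <- Hs0. apply flow_stop_le, (avoid_inC inC s); auto. }
  assert (Hpi_sum : nnsum (fun k => if inC k then pi k else 0) = Fin 0).
  { apply nnsum_zero. intros k. destruct (inC k) eqn:Ek; auto.
    specialize (Hzero k Ek). unfold flow in Hzero.
    assert (0 < qtot q k) by (apply (qtot_pos q inC Hstd s Cs qtot_s_pos); auto). nra. }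
  destruct Hpi as [_ [Hpi1 _]]. rewrite Hpi1 in Hpi_sum. injection Hpi_sum; lra.
Qed.

Lemma visits_step_bound P P' (u : nat -> R) j :
  (forall i, visits q inC s P i = Fin (u i)) -> (forall i, inC i = true -> flow s * u i <= flow i) ->
  (forall k x, P' (k ++ [x]) = P k) -> avoid j = true ->
  exists r, visits q inC s P' j = Fin r /\ flow s * r <= flow j.
Proof.
  intros Hu Hle HP Hj. assert (Hfs := flow_s_pos).
  rewrite (visits_step q inC Hstd s Cs P P' j u Hj Hu HP).
  destruct (nnsum_le_Fin (fun i => jumpP q i j * u i)
     (fun i => / flow s * (if inC i && negb (i =? j)%nat then flow i * jumpP q i j else 0))
     (/ flow s * flow j)) as [r [Hr Hr']].
  - intros i. destruct (inC i) eqn:Ei; cbn.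
    + destruct (i =? j)%nat eqn:Eij; cbn.
      * apply Nat.eqb_eq in Eij; subst. rewrite jumpP_diag. lra.
      * assert (0 <= jumpP q i j)
          by (apply (jumpP_ge0 q inC Hstd); apply inS_of_inC; auto; apply (avoid_inC inC s); auto).
        specialize (Hle i Ei).
        assert (0 <= jumpP q i j * / flow s * (flow i - flow s * u i)).
        { apply Rmult_le_pos; [|lra].
          apply Rmult_le_pos; [lra | apply Rlt_le, Rinv_0_lt_compat; lra]. }
        replace (/ flow s * (flow i * jumpP q i j))
          with (jumpP q i j * u i + jumpP q i j * / flow s * (flow i - flow s * u i))
          by (field; lra).
        lra.
    + assert (u i = 0) by (generalize (visits_notC q inC s Cs P i Ei); rewrite Hu; congruence).
      rewrite H, Rmult_0_r, Rmult_0_r; lra.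
  - apply nnsum_scal; [apply Rlt_le, Rinv_0_lt_compat; auto | apply flow_balance; auto].
  - exists r; split; auto.
    apply (Rmult_le_compat_l (flow s)) in Hr'; [|lra].
    replace (flow s * (/ flow s * flow j)) with (flow j) in Hr' by (field; lra). auto.
Qed.

Lemma visits_short_bound n i : inC i = true ->
  exists r, visits q inC s (short n) i = Fin r /\ flow s * r <= flow i.
Proof.
  revert i; induction n as [|n IH]; intros i Hi;
    (destruct (Nat.eq_dec i s) as [->|His];
     [exists 1; rewrite visits_s by reflexivity; split; [reflexivity | lra] |]).
  - exists 0. split; [|rewrite Rmult_0_r; apply flow_ge0; auto].
    apply nnsum_zero. intros [|a k]; cbn.
    + rewrite (proj2 (Nat.eqb_neq s i)) by auto. reflexivity.
    + rewrite andb_false_r. reflexivity.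
  - apply (visits_step_bound (short n) (short (S n)) (fun x => fin_value (visits q inC s (short n) x))).
    + apply visits_fin_value; auto. intros x Hx. destruct (IH x Hx) as [r [Hr _]]; eauto.
    + intros x Hx. destruct (IH x Hx) as [r [-> Hr]]. exact Hr.
    + apply short_rcons.
    + apply avoidI; auto.
Qed.

Lemma visits_bound i : inC i = true ->
  exists r, visits q inC s (fun _ => true) i = Fin r /\ flow s * r <= flow i.
Proof.
  intros Hi. assert (Hfs := flow_s_pos).
  destruct (nnsum_bounded_Fin (fun k => if forallb avoid k && true && (last (s :: k) s =? i)%nat
                                        then pathw q s k else 0) (flow i / flow s))
    as [r [Hr Hr']].
  - intros L HL. set (n := list_max (map (@length nat) L)).
    destruct (visits_short_bound n i Hi) as [rn [Hrn Hrn']].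
    apply Rle_trans with rn.
    + rewrite (fsum_ext_in _ (fun k => if forallb avoid k && short n k && (last (s :: k) s =? i)%nat
                                       then pathw q s k else 0)).
      * apply (nnsum_Fin_bounded _ _ Hrn); auto.
      * intros k Hk. unfold short.
        rewrite (proj2 (Nat.leb_le (length k) n)); [reflexivity|].
        refine (proj1 (Forall_forall _ _) (proj1 (list_max_le _ n) (le_n _)) _ _).
        apply in_map; auto.
    + apply (Rmult_le_reg_l (flow s)); auto. field_simplify; lra.
  - exists r; split; [exact Hr|].
    apply (Rmult_le_compat_l (flow s)) in Hr'; [|lra].
    replace (flow s * (flow i / flow s)) with (flow i) in Hr' by (field; lra). exact Hr'.
Qed.

Definition occupation i := fin_value (visits q inC s (fun _ => true) i).

Lemma visits_occupation i : visits q inC s (fun _ => true) i = Fin (occupation i).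
Proof.
  apply visits_fin_value; auto. intros x Hx.
  destruct (visits_bound x Hx) as [r [Hr _]]; eauto.
Qed.

Lemma occupation_ge0 i : 0 <= occupation i.
Proof. exact (nnsum_Fin_ge0 _ _ (visits_occupation i)). Qed.

Lemma flow_ge_occupation i : inC i = true -> flow s * occupation i <= flow i.
Proof. intros Hi. destruct (visits_bound i Hi) as [r [Hr Hle]]. unfold occupation. rewrite Hr. exact Hle. Qed.

Lemma occupation_s : occupation s = 1.
Proof. unfold occupation. rewrite (visits_s q inC s (fun _ => true)); reflexivity. Qed.

Lemma occupation_notC i : inC i = false -> occupation i = 0.
Proof. intros Hi. unfold occupation. rewrite (visits_notC q inC s Cs); auto. Qed.

Lemma occupation_balance j : avoid j = true ->
  nnsum (fun i => jumpP q i j * occupation i) = Fin (occupation j).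
Proof.
  intros Hj. rewrite <- visits_occupation.
  symmetry. apply (visits_step q inC Hstd s Cs (fun _ => true)); auto using visits_occupation.
Qed.

Hypothesis Hterm : forall k, inC k = true -> p_term q inC s k = Fin 1.

Lemma stop_jump_prob i : inC i = true ->
  nnsum (fun x => if (x =? s)%nat || (x =? 0)%nat then jumpP q i x else 0)
  = Fin (jumpP q i s + jumpP q i 0%nat).
Proof.
  intros Hi. assert (Hs0 := s_neq0 q inC Hstd s Cs).
  rewrite (nnsum_finite_support _ [s; 0%nat]).
  - cbn. rewrite Nat.eqb_refl, orb_true_r. cbn. f_equal; ring.
  - repeat constructor; cbn; intuition.
  - intros x Hx. destruct (x =? s)%nat eqn:E1; [apply Nat.eqb_eq in E1; subst; cbn in Hx; tauto|].
    destruct (x =? 0)%nat eqn:E2; [apply Nat.eqb_eq in E2; subst; cbn in Hx; tauto|]. reflexivity.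
  - intros x. destruct ((x =? s)%nat || (x =? 0)%nat) eqn:E; [|lra].
    apply (jumpP_ge0 q inC Hstd); [apply inS_of_inC; auto | apply (stop_inS inC s Cs); auto].
Qed.

Lemma occupation_stop_total :
  nnsum (fun i => (jumpP q i s + jumpP q i 0%nat) * occupation i) = Fin 1.
Proof.
  rewrite <- (Hterm s Cs). unfold p_term.
  symmetry. apply (hitprob_by_visits q inC Hstd s Cs); auto using visits_occupation, stop_jump_prob.
  - apply (stop_inS inC s Cs).
  - intros i Hi. apply Rplus_le_le_0_compat; apply (jumpP_ge0 q inC Hstd);
      auto using inS_of_inC.
Qed.

Lemma p_hit_occupation : p_hit q inC s s = nnsum (fun i => jumpP q i s * occupation i).
Proof.
  apply (hitprob_by_visits q inC Hstd s Cs); auto using visits_occupation.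
  - intros x Hx%Nat.eqb_eq; subst. apply inS_of_inC, Cs.
  - intros i Hi. rewrite (nnsum_single _ s).
    + rewrite Nat.eqb_refl. reflexivity.
    + intros x Hx. rewrite (proj2 (Nat.eqb_neq x s) Hx). reflexivity.
    + rewrite Nat.eqb_refl. apply (jumpP_ge0 q inC Hstd); apply inS_of_inC; auto.
  - intros i Hi. apply (jumpP_ge0 q inC Hstd); apply inS_of_inC; auto.
Qed.

Lemma flow_step_dominates j : avoid j = true -> forall x,
  0 <= flow s * (jumpP q x j * occupation x) <=
  (if inC x && negb (x =? j)%nat then flow x * jumpP q x j else 0).
Proof.
  intros Hj x. assert (Hfs := flow_s_pos). assert (Hu := occupation_ge0 x).
  destruct (inC x) eqn:Ex; cbn.
  - assert (0 <= jumpP q x j)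
      by (apply (jumpP_ge0 q inC Hstd); apply inS_of_inC; auto; apply (avoid_inC inC s); auto).
    destruct (x =? j)%nat eqn:Exj; cbn.
    + apply Nat.eqb_eq in Exj; subst. rewrite jumpP_diag. lra.
    + generalize (flow_ge_occupation x Ex). split; [|nra].
      apply Rmult_le_pos; [lra | apply Rmult_le_pos; auto].
  - rewrite occupation_notC by auto. lra.
Qed.

Lemma flow_stop_dominates x :
  0 <= flow s * ((jumpP q x s + jumpP q x 0%nat) * occupation x) <=
  (if inC x then flow x * (jumpP q x s + jumpP q x 0%nat) else 0).
Proof.
  assert (Hfs := flow_s_pos). assert (Hu := occupation_ge0 x).
  destruct (inC x) eqn:Ex.
  - assert (0 <= jumpP q x s + jumpP q x 0%nat)
      by (apply Rplus_le_le_0_compat; apply (jumpP_ge0 q inC Hstd); auto using inS_of_inC).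
    generalize (flow_ge_occupation x Ex). split; [|nra].
    apply Rmult_le_pos; [lra | apply Rmult_le_pos; auto].
  - rewrite occupation_notC by auto. lra.
Qed.

(* flow - flow s * occupation is nonnegative, excessive and zero at s. *)
Lemma flow_eq_occupation x : inC x = true -> flow x = flow s * occupation x.
Proof.
  intros Hx. assert (Hfs := flow_s_pos).
  enough (flow x - flow s * occupation x = 0) by lra.
  revert x Hx.
  apply (excessive_vanishes q inC Hstd s Cs qtot_s_pos (fun x => flow x - flow s * occupation x)).
  - intros x Hx. generalize (flow_ge_occupation x Hx); lra.
  - rewrite occupation_s; ring.
  - intros i j Hi Hj Hij.
    assert (Hbound := nnsum_term_le_sub _ (fun x => flow s * (jumpP q x j * occupation x)) _ _ i
      (flow_step_dominates j Hj) (flow_balance j Hj)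
      (nnsum_scal _ _ _ (Rlt_le _ _ Hfs) (occupation_balance j Hj))).
    cbv beta in Hbound. rewrite Hi, (proj2 (Nat.eqb_neq i j) Hij) in Hbound. cbn in Hbound.
    lra.
  - intros i Hi.
    assert (Hbound := nnsum_term_le_sub _
      (fun x => flow s * ((jumpP q x s + jumpP q x 0%nat) * occupation x)) _ _ i
      flow_stop_dominates flow_into_stop
      (nnsum_scal _ _ _ (Rlt_le _ _ Hfs) occupation_stop_total)).
    cbv beta in Hbound. rewrite (avoid_inC inC s i Hi) in Hbound. lra.
Qed.

Lemma m_term_flow : m_term q inC s s = Fin (/ flow s).
Proof.
  assert (Hfs := flow_s_pos).
  rewrite (m_term_by_visits q inC Hstd s Cs occupation Hterm visits_occupation).
  rewrite (nnsum_ext _ (fun i => / flow s * (if inC i then pi i else 0))).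
  - replace (Fin (/ flow s)) with (Fin (/ flow s * 1)) by (f_equal; ring).
    apply nnsum_scal; [apply Rlt_le, Rinv_0_lt_compat; auto | apply Hpi].
  - intros i. destruct (inC i) eqn:Hi.
    + assert (Hq := qtot_pos q inC Hstd s Cs qtot_s_pos i Hi).
      assert (Hocc : occupation i = flow i / flow s)
        by (rewrite (flow_eq_occupation i Hi); field; lra).
      rewrite Hocc. unfold flow at 1. field. lra.
    + rewrite occupation_notC by auto. ring.
Qed.

Lemma killing_flow ps : p_hit q inC s s = Fin ps ->
  nnsum (fun k => if inC k then pi k * q k 0%nat else 0) = Fin (flow s * (1 - ps)).
Proof.
  intros Hps. assert (Hfs := flow_s_pos).
  assert (Hkill : nnsum (fun i => (jumpP q i s + jumpP q i 0%nat) * occupation i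
                                  - jumpP q i s * occupation i) = Fin (1 - ps)).
  { rewrite p_hit_occupation in Hps. apply nnsum_sub; auto using occupation_stop_total.
    - intros i. destruct (inC i) eqn:Hi; [|rewrite occupation_notC by auto; lra].
      apply Rmult_le_pos; auto using occupation_ge0.
      apply (jumpP_ge0 q inC Hstd); apply inS_of_inC; auto.
    - intros i. destruct (inC i) eqn:Hi; [|rewrite occupation_notC by auto; lra].
      assert (0 <= jumpP q i 0%nat) by (apply (jumpP_ge0 q inC Hstd); auto using inS_of_inC).
      generalize (occupation_ge0 i); nra. }
  rewrite <- (nnsum_scal _ _ _ (Rlt_le _ _ Hfs) Hkill). apply nnsum_ext. intros k.
  destruct (inC k) eqn:Hk; [|rewrite occupation_notC by auto; ring].
  assert (Hk0 : (k =? 0)%nat = false)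
    by (apply Nat.eqb_neq; intros ->; rewrite (notC_0 q inC Hstd) in Hk; discriminate).
  assert (Hq := qtot_pos q inC Hstd s Cs qtot_s_pos k Hk).
  unfold jumpP at 2. rewrite Hk0.
  replace (flow s * ((jumpP q k s + q k 0%nat / qtot q k) * occupation k
                     - jumpP q k s * occupation k))
    with (flow s * occupation k * q k 0%nat / qtot q k) by (field; lra).
  rewrite <- (flow_eq_occupation k Hk). unfold flow. field. lra.
Qed.

End Stationary.

(* With q_s = 0 the chain never leaves s, so p_s = 0 < p would fail. *)
Lemma qtot_s_pos_of_conditionB q inC s : standing q inC -> conditionB q inC s -> 0 < qtot q s.
Proof.
  intros Hstd [Cs [[p [Hp [Hk _]]] _]]. destruct (Hk s Cs) as [ps [Hps Hle]].
  destruct (Rle_lt_dec (qtot q s) 0) as [Hle0|]; auto. exfalso.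
  assert (Z : qtot q s = 0) by (generalize (qtot_ge0 q inC Hstd s (inS_of_inC _ _ Cs)); lra).
  assert (Hzero : p_hit q inC s s = Fin 0).
  { apply nnsum_zero. intros [|x l]; [reflexivity|].
    destruct hits; [|reflexivity]. cbn [pathw]. unfold jumpP.
    destruct (s =? x)%nat; [ring|]. unfold Rdiv. rewrite Z, Rinv_0. ring. }
  rewrite Hzero in Hps. injection Hps; lra.
Qed.

Lemma p_term_of_conditionB q inC s : conditionB q inC s ->
  forall k, inC k = true -> p_term q inC s k = Fin 1.
Proof.
  intros [_ [_ HT]] k Hk. specialize (HT k Hk). unfold T_hit in HT.
  destruct excluded_middle_informative; congruence.
Qed.

Theorem mainTheorem4 (q : nat -> nat -> R) (inC : nat -> bool) (s : nat)
  (pi : nat -> R) :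
  standing q inC ->
  conditionB q inC s ->
  stationary inC (qret q (dirac s)) pi ->
  exists ps Ts, p_hit q inC s s = Fin ps /\ T_hit q inC s s = Fin Ts /\
    nnsum (fun k => if inC k then pi k * q k 0%nat else 0) = Fin ((1 - ps) / Ts).
Proof.
  intros Hstd HB Hpi.
  assert (Cs : inC s = true) by apply HB.
  assert (Hqs := qtot_s_pos_of_conditionB q inC s Hstd HB).
  assert (Hterm := p_term_of_conditionB q inC s HB).
  assert (Hfs := flow_s_pos q inC s pi Hstd Cs Hqs Hpi).
  destruct HB as [_ [[p [_ [Hk _]]] _]]. destruct (Hk s Cs) as [ps [Hps _]].
  exists ps, (/ flow q pi s). repeat split; auto.
  - unfold T_hit. destruct excluded_middle_informative as [_|C].
    + exact (m_term_flow q inC s pi Hstd Cs Hqs Hpi Hterm).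
    + exfalso; apply C, Hterm, Cs.
  - rewrite (killing_flow q inC s pi Hstd Cs Hqs Hpi Hterm ps Hps).
    f_equal. field. lra.
Qed.
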